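(* Let $G$ be a finite bipartite graph having a nonempty channel $C$. Then to each perfect matching $\mu$ of $G$ one can assign a nonempty set of edges $S(\mu)\subseteq E$ such that: (i) $S(\mu)$ is a simple cycle of even length; (ii) every second edge of $S(\mu)$ lies in $\mu$; (iii) $S(\mu)$ depends only on the edges of $\mu$ that contain a vertex of $C$; (iv) if $\mu'$ is a perfect matching with $S(\mu)=\mu\oplus\mu'$ (symmetric difference), then $S(\mu')=S(\mu)$.
   Context: A channel of a graph $G=(V,E)$ is a set $C\subseteq V$ such that every vertex of $G$ is adjacent to an even number of vertices of $C$. *)

(* A finite simple graph = symmetric irreflexive relation
   e on a finType T; an edge is the 2-element vertex set [set x; y]. *)
From mathcomp Require Import all_boot all_order.
Set Implicit Arguments. Unset Strict Implicit. Unset Printing Implicit Defensive.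

Section Graphs.
Variable T : finType.
Implicit Types (e : rel T) (C : {set T}) (M S : {set {set T}}) (p : seq T).

Definition simple_graph e : Prop := irreflexive e /\ symmetric e.

Definition edges e : {set {set T}} := [set [set u.1; u.2] | u in [set u : T * T | e u.1 u.2]].

Definition bipartite e : Prop := exists f : T -> bool, forall x y, e x y -> f x != f y.

Definition is_channel e C : Prop := forall v : T, ~~ odd #|[set u in C | e v u]|.

Definition perfect_matching e M : Prop :=
  M \subset edges e /\ forall v : T, #|[set m in M | v \in m]| = 1.

Definition cycle_edges p : {set {set T}} := [set [set x; next p x] | x in p].

Definition even_alternating_cycle e M S : Prop :=
  exists p : seq T,
    [/\ uniq p && (3 <= size p)%N, ~~ odd (size p), cycle e p,
        S = cycle_edges p &
        forall x, x \in p -> ~~ odd (index x p) -> [set x; next p x] \in M].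

Definition touching M C : {set {set T}} := [set m in M | m :&: C != set0].

Definition symdiff M S : {set {set T}} := (M :\: S) :|: (S :\: M).
End Graphs.

From mathcomp Require Import all_boot all_order.
From mathcomp Require Import zify.
Set Implicit Arguments. Unset Strict Implicit. Unset Printing Implicit Defensive.

(* Let [D] be the vertices of [C] in the colour class of some [c0 \in C].  [D]
   is independent and, by the channel property, every vertex has an even
   number of neighbours in [D]; pair them up once and for all.  Given a
   perfect matching, walk from [c0]: from a vertex of [D] follow its matching
   edge, and from the mate [x] of [c \in D] move to the partner of [c] among
   the [D]-neighbours of [x].  The walk only reads matching edges at [C] and
   alternates between [D] and its mates, so the cycle it ends up on is an even
   alternating cycle.  Swapping the matching along that cycle reverses the walk
   on the cycle and leaves it unchanged elsewhere, so the new walk from [c0]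
   ends up on the same cycle. *)

Section EventualCycle.
Variables (T : finType) (h : T -> T) (x0 : T) (N : nat).
Hypothesis leTN : #|T| <= N.
Local Notation y := (iter N h x0).

Lemma iter_card_periodic : exists k, iter k.+1 h y = y.
Proof.
have /trajectP [i lti Ei] := looping_order h x0.
have Ho : order h x0 <= #|T| := max_card _.
exists (order h x0 - i).-1; rewrite prednK ?subn_gt0 // -iterD.
have -> : order h x0 - i + N = (N - i) + order h x0 by lia.
by rewrite iterD Ei -iterD subnK //; lia.
Qed.

Lemma fcycle_orbit_iter_card : fcycle h (orbit h y).
Proof. exact: (all_iffLR orbitPcycle 3 0) iter_card_periodic. Qed.

Lemma fconnect_iter_card_sym z : fconnect h y z -> fconnect h z y.
Proof.
rewrite fconnect_orbit => yz.
by rewrite (fconnect_cycle fcycle_orbit_iter_card yz) in_orbit.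
Qed.

Lemma fconnect_iter_card_pre z : fconnect h y z -> exists2 u, fconnect h y u & h u = z.
Proof.
move=> yz; have hzz : fconnect h (h z) z.
  exact: connect_trans (fconnect_iter_card_sym (connect_trans yz (fconnect1 h z))) yz.
exists (iter (findex h (h z) z) h z); first exact: connect_trans yz (fconnect_iter _ _ _).
by rewrite -iterS iterSr iter_findex.
Qed.

End EventualCycle.

Section ReversedCycle.
Variables (T : finType) (h h' : T -> T) (x0 : T) (N : nat).
Hypothesis leTN : #|T| <= N.
Local Notation y := (iter N h x0).
Hypothesis eq_off_cycle : forall z, ~~ fconnect h y z -> h' z = h z.
Hypothesis reverse_on_cycle : forall z, fconnect h y z -> h' (h z) = z.

Lemma fconnect_reverse_closed z : fconnect h y z -> fconnect h y (h' z).
Proof. by move=> /(fconnect_iter_card_pre leTN) [u yu <-]; rewrite reverse_on_cycle. Qed.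

Lemma fconnect_reverse_cancel z : fconnect h y z -> h (h' z) = z.
Proof. by move=> /(fconnect_iter_card_pre leTN) [u yu <-]; rewrite reverse_on_cycle. Qed.

(* Until the first [h]-trajectory point on the cycle, [h'] follows [h];
   afterwards it never leaves the cycle. *)
Lemma fconnect_iter_card_reverse_start : fconnect h y (iter N h' x0).
Proof.
have exP : exists i, fconnect h y (iter i h x0) by exists N; apply: connect0.
have [i yi min_i] := ex_minnP exP.
have eq_iter k : k <= i -> iter k h' x0 = iter k h x0.
  elim: k => // k IHk le_ki; rewrite !iterS IHk ?(ltnW le_ki) //.
  by apply: eq_off_cycle; apply/negP => /min_i; lia.
have on_cycle k : fconnect h y (iter (i + k) h' x0).
  elim: k => [|k IHk]; first by rewrite addn0 eq_iter.
  by rewrite addnS iterS; apply: fconnect_reverse_closed.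
have le_iN : i <= N by apply: min_i; apply: connect0.
by have := on_cycle (N - i); rewrite subnKC.
Qed.

Lemma fconnect_iter_card_reverse : fconnect h' (iter N h' x0) =1 fconnect h y.
Proof.
set y' := iter N h' x0; have yy' := fconnect_iter_card_reverse_start.
have sub z : fconnect h' y' z -> fconnect h y z.
  move=> /iter_findex <-; elim: (findex h' y' z) => //= j.
  exact: fconnect_reverse_closed.
move=> z; apply/idP/idP => [/sub // | yz].
move: (connect_trans (fconnect_iter_card_sym leTN yy') yz) => /iter_findex <-.
elim: (findex h y' z) => [|j IHj] /=; first exact: connect0.
have [u yu <-] := fconnect_iter_card_pre leTN IHj.
by rewrite fconnect_reverse_cancel ?sub.
Qed.

End ReversedCycle.

Section Partner.
Variable T : eqType.

Definition flip i := if odd i then i.-1 else i.+1.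

Lemma flipK : involutive flip.
Proof. by case=> [|i] //; rewrite /flip /=; case odd_i: (odd i); rewrite /= ?odd_i. Qed.

Lemma flip_neq i : flip i != i.
Proof. by case: i => [|i] //; rewrite /flip /=; case: ifP => _; lia. Qed.

Lemma flip_lt n i : ~~ odd n -> i < n -> flip i < n.
Proof.
rewrite /flip; case: ifP => odd_i even_n lt_in; first by lia.
suff : i.+1 != n by lia.
by apply: contraNneq even_n => <- /=; rewrite odd_i.
Qed.

Definition partner (s : seq T) x := nth x s (flip (index x s)).

Variable s : seq T.
Hypotheses (uniq_s : uniq s) (even_s : ~~ odd (size s)).

Lemma index_partner x : x \in s -> index (partner s x) s = flip (index x s).
Proof. by move=> xs; rewrite index_uniq // flip_lt // index_mem. Qed.

Lemma partner_mem x : x \in s -> partner s x \in s.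
Proof. by move=> xs; rewrite mem_nth // flip_lt // index_mem. Qed.

Lemma partner_neq x : x \in s -> partner s x != x.
Proof.
move=> xs; apply: contraNneq (flip_neq (index x s)) => eq_px.
by rewrite -index_partner // eq_px.
Qed.

Lemma partnerK x : x \in s -> partner s (partner s x) = x.
Proof.
move=> xs; rewrite /partner index_partner // flipK.
by rewrite (set_nth_default x) ?nth_index ?index_mem.
Qed.

End Partner.

Section Matching.
Variables (T : finType) (e : rel T) (C : {set T}) (M : {set {set T}}).
Hypotheses (irr : irreflexive e) (sym : symmetric e).

Definition mate (N : {set {set T}}) x := odflt x [pick y | [set x; y] \in N].

Lemma edges_rel x y : [set x; y] \in edges e -> e x y.
Proof.
case/imsetP=> [[u v]]; rewrite inE /= => euv Exy.
have : u \in [set x; y] by rewrite Exy set21.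
have : v \in [set x; y] by rewrite Exy set22.
rewrite !inE => /orP[]/eqP vE /orP[]/eqP uE; move: euv; rewrite uE vE ?irr //.
by rewrite sym.
Qed.

Lemma mem_touching2 x y : (x \in C) || (y \in C) ->
  ([set x; y] \in touching M C) = ([set x; y] \in M).
Proof.
move=> xyC; rewrite inE andb_idr // => _; apply/set0Pn.
by case/orP: xyC => [xC | yC]; [exists x | exists y]; rewrite !inE eqxx ?orbT.
Qed.

Hypothesis pmM : perfect_matching e M.
Local Notation N := (touching M C).

Lemma perfect_matching_uniq m1 m2 v :
  m1 \in M -> m2 \in M -> v \in m1 -> v \in m2 -> m1 = m2.
Proof.
case: pmM => _ /(_ v) /eqP /cards1P [m Em] m1M m2M vm1 vm2.
have : m1 \in [set m in M | v \in m] by rewrite inE m1M.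
have : m2 \in [set m in M | v \in m] by rewrite inE m2M.
by rewrite Em !inE => /eqP-> /eqP->.
Qed.

Lemma perfect_matching_rel x y : [set x; y] \in M -> e x y.
Proof. by case: pmM => /subsetP sub_ME _ /sub_ME; apply: edges_rel. Qed.

Lemma mate_eq x y : [set x; y] \in N -> mate N x = y.
Proof.
move=> xyN; have xyM : [set x; y] \in M by case/setIdP: xyN.
rewrite /mate; case: pickP => [z /setIdP[xzM _] | /(_ y)]; last by rewrite xyN.
have Exzy := perfect_matching_uniq xzM xyM (set21 _ _) (set21 _ _).
have : z \in [set x; y] by rewrite -Exzy set22.
rewrite !inE => /orP[/eqP zx | /eqP //].
by have := perfect_matching_rel xzM; rewrite zx irr.
Qed.

Lemma mate_touching c : c \in C -> [set c; mate N c] \in N.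
Proof.
move=> cC; case: pmM => /subsetP sub_ME /(_ c) /eqP /cards1P [m Em].
have /setIdP[mM cm] : m \in [set m in M | c \in m] by rewrite Em set11.
have /imsetP [[u v] _ Em'] := sub_ME _ mM.
have [y Ey] : exists y, m = [set c; y].
  by move: cm; rewrite Em' !inE => /orP[]/eqP->; [exists v | exists u; rewrite setUC].
have cyN : [set c; y] \in N by rewrite mem_touching2 ?cC // -Ey.
by rewrite (mate_eq cyN).
Qed.

Lemma rel_mate c : c \in C -> e c (mate N c).
Proof. by move/mate_touching/setIdP => [/perfect_matching_rel]. Qed.

Lemma mateK c : c \in C -> mate N (mate N c) = c.
Proof. by move=> cC; apply: mate_eq; rewrite setUC; apply: mate_touching. Qed.

End Matching.

Lemma leq_double_self n : n <= n.*2.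
Proof. by rewrite -addnn leq_addr. Qed.

Section ChannelCycle.
Variables (T : finType) (e : rel T) (C D : {set T}) (c0 : T).
Hypotheses (irr : irreflexive e) (sym : symmetric e).
Hypotheses (sub_DC : D \subset C) (D_indep : {in D &, forall x y, ~~ e x y}).
Hypothesis even_D_nbhd : forall v, ~~ odd #|[set u in D | e v u]|.
Hypothesis c0D : c0 \in D.

Definition D_partner v := partner (enum [set u in D | e v u]).

Lemma D_partner_spec v u : u \in D -> e v u ->
  [/\ D_partner v u \in D, e v (D_partner v u), D_partner v u != u
    & D_partner v (D_partner v u) = u].
Proof.
move=> uD evu; set s := enum [set u in D | e v u].
have us : u \in s by rewrite mem_enum inE uD.
have uniq_s : uniq s := enum_uniq _.
have even_s : ~~ odd (size s) by rewrite -cardE even_D_nbhd.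
have := partner_mem even_s us; rewrite mem_enum inE => /andP[-> ->].
by rewrite /D_partner partner_neq ?partnerK.
Qed.

Definition step N x := if x \in D then mate N x else D_partner x (mate N x).

(* After [#|T|] steps the walk is on its final cycle; an even number of steps
   keeps it in [D]. *)
Definition cycle_vertices N :=
  [set z | fconnect (step N) (iter #|T|.*2 (step N) c0) z].

Definition cycle_set N := [set [set z; step N z] | z in cycle_vertices N].

Lemma step_D N x : x \in D -> step N x = mate N x.
Proof. by rewrite /step => ->. Qed.

Lemma step_notin_D N x : x \notin D -> step N x = D_partner x (mate N x).
Proof. by rewrite /step => /negPf->. Qed.

Lemma D_in_C x : x \in D -> x \in C. Proof. exact: subsetP. Qed.

Section OneMatching.
Variable M : {set {set T}}.
Hypothesis pmM : perfect_matching e M.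
Local Notation N := (touching M C).
Local Notation mate := (mate N).
Local Notation step := (step N).
Local Notation O := (cycle_vertices N).

Lemma mate_notin_D c : c \in D -> mate c \notin D.
Proof.
move=> cD; apply/negP => mD.
by have := D_indep cD mD; rewrite rel_mate ?D_in_C.
Qed.

Lemma step_mate c : c \in D -> step (mate c) = D_partner (mate c) c.
Proof.
by move=> cD; rewrite step_notin_D ?mate_notin_D // (mateK irr sym pmM) ?D_in_C.
Qed.

Definition D_or_mate x := x \in D \/ exists2 c, c \in D & x = mate c.

Lemma step_spec x : D_or_mate x ->
  [/\ e x (step x), D_or_mate (step x) & (step x \in D) = (x \notin D)].
Proof.
case=> [xD | [c cD ->]].
  rewrite step_D // (negPf (mate_notin_D xD)) xD.
  by split=> //; [apply: rel_mate; rewrite ?D_in_C | right; exists x].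
have e_mc : e (mate c) c by rewrite sym; apply: rel_mate; rewrite ?D_in_C.
have [pD epc _ _] := D_partner_spec cD e_mc.
by rewrite step_mate // pD mate_notin_D //; split=> //; left.
Qed.

Lemma D_or_mate_iter k : D_or_mate (iter k step c0).
Proof. by elim: k => [|k IHk]; [left | case: (step_spec IHk)]. Qed.

Lemma iter_step_in_D k : (iter k step c0 \in D) = ~~ odd k.
Proof.
elim: k => [|k IHk] //=; have [_ _ ->] := step_spec (D_or_mate_iter k).
by rewrite IHk.
Qed.

Local Notation y := (iter #|T|.*2 step c0).

Lemma fcycle_step_orbit : fcycle step (orbit step y).
Proof. exact: fcycle_orbit_iter_card (leq_double_self #|T|). Qed.

Lemma cycle_verticesE z : (z \in O) = (z \in orbit step y).
Proof. by rewrite inE fconnect_orbit. Qed.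

Lemma cycle_vertices_D_or_mate z : z \in O -> D_or_mate z.
Proof. by rewrite inE => /iter_findex <-; rewrite -iterD; apply: D_or_mate_iter. Qed.

Lemma step_cycle_vertices z : z \in O -> step z \in O.
Proof. by rewrite !inE => yz; apply: connect_trans yz (fconnect1 _ _). Qed.

Lemma orbit_in_D z : z \in orbit step y -> (z \in D) = ~~ odd (index z (orbit step y)).
Proof.
rewrite -cycle_verticesE inE => /iter_findex Ez.
by rewrite -{1}Ez -iterD iter_step_in_D oddD odd_double addbF.
Qed.

Lemma iter_order_step : iter (order step y) step y = y.
Proof. exact: (all_iffLR orbitPcycle 0 4) fcycle_step_orbit. Qed.

Lemma even_order_step : ~~ odd (order step y).
Proof.
have := iter_step_in_D (order step y + #|T|.*2).
by rewrite iterD iter_order_step iter_step_in_D oddD odd_double addbF => <-.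
Qed.

Lemma order_step_neq2 : order step y != 2.
Proof.
have yD : y \in D by rewrite iter_step_in_D odd_double.
have e_my : e (mate y) y by rewrite sym; apply: rel_mate; rewrite ?D_in_C.
have [_ _ neq_y _] := D_partner_spec yD e_my.
apply/eqP => ord2; move: iter_order_step; rewrite ord2 /= (step_D _ yD) step_mate //.
exact/eqP.
Qed.

Lemma cycle_set_sub_edges : cycle_set N \subset edges e.
Proof.
apply/subsetP => _ /imsetP[z Oz ->]; apply/imsetP; exists (z, step z) => //.
by rewrite inE; case: (step_spec (cycle_vertices_D_or_mate Oz)).
Qed.

Lemma cycle_set_neq0 : cycle_set N != set0.
Proof.
apply/set0Pn; exists [set y; step y]; apply/imsetP; exists y => //.
by rewrite cycle_verticesE in_orbit.
Qed.

Lemma cycle_set_alternating : even_alternating_cycle e M (cycle_set N).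
Proof.
set p := orbit step y.
have next_p x : x \in p -> next p x = step x.
  by move=> xp; apply/esym/eqP; apply: next_cycle fcycle_step_orbit xp.
exists p; split.
- rewrite orbit_uniq size_orbit /=.
  move: even_order_step order_step_neq2 (order_gt0 step y).
  by case: (order step y) => [|[|[|n]]].
- by rewrite size_orbit even_order_step.
- apply: (sub_in_cycle (P := mem O)) fcycle_step_orbit; last first.
    by apply/allP => z; rewrite -cycle_verticesE.
  move=> u v /= Ou _ /eqP <-.
  by case: (step_spec (cycle_vertices_D_or_mate Ou)).
- apply/setP => m; apply/imsetP/imsetP => -[z zO ->]; exists z;
    by rewrite ?next_p -?cycle_verticesE // cycle_verticesE.
- move=> x xp even_x; have xD : x \in D by rewrite orbit_in_D.
  rewrite next_p // step_D //.
  by have /setIdP[] := mate_touching irr sym pmM (D_in_C xD).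
Qed.

End OneMatching.

Section SwapAlongCycle.
Variables M M' : {set {set T}}.
Hypotheses (pmM : perfect_matching e M) (pmM' : perfect_matching e M').
Local Notation N := (touching M C).
Local Notation N' := (touching M' C).
Local Notation O := (cycle_vertices N).
Hypothesis cycle_symdiff : cycle_set N = symdiff M M'.

Lemma mem_cycle_set m : m \in cycle_set N -> (m \in M') = (m \notin M).
Proof. by rewrite cycle_symdiff !inE; case: (m \in M); case: (m \in M'). Qed.

Lemma mem_off_cycle_set m : m \notin cycle_set N -> (m \in M') = (m \in M).
Proof. by rewrite cycle_symdiff !inE; case: (m \in M); case: (m \in M'). Qed.

Lemma cycle_set_vertex x w : [set x; w] \in cycle_set N -> x \in O.
Proof.
case/imsetP=> z zO Exw; have : x \in [set z; step N z] by rewrite -Exw set21.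
by case/set2P=> ->; rewrite ?step_cycle_vertices.
Qed.

Lemma step_off_cycle x : x \notin O -> step N' x = step N x.
Proof.
move=> xO; rewrite /step; suff -> : mate N' x = mate N x by [].
rewrite /mate; congr odflt; apply: eq_pick => w /=.
by rewrite !inE mem_off_cycle_set //; apply: contra xO; apply: cycle_set_vertex.
Qed.

Lemma swapped_cycle_edge z : z \in O -> z \notin D ->
  mate N' z = step N z /\ mate N' (step N z) = z.
Proof.
move=> zO zD; have [zD' | [c cD zE]] := cycle_vertices_D_or_mate pmM zO.
  by rewrite zD' in zD.
have e_zc : e z c by rewrite zE sym; apply: rel_mate; rewrite ?D_in_C.
have stepE : step N z = D_partner z c by rewrite zE (step_mate pmM).
have [wD _ w_neq_c _] := D_partner_spec cD e_zc; rewrite stepE.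
have zw_cycle : [set z; D_partner z c] \in cycle_set N.
  by apply/imsetP; exists z; rewrite ?stepE.
have zw_notM : [set z; D_partner z c] \notin M.
  apply: contra w_neq_c => zwM.
  have <- : mate N z = D_partner z c.
    by apply: (mate_eq irr sym pmM); rewrite mem_touching2 ?(D_in_C wD) ?orbT.
  by rewrite zE (mateK irr sym pmM) ?D_in_C.
have zwN' : [set z; D_partner z c] \in N'.
  by rewrite mem_touching2 ?(D_in_C wD) ?orbT // mem_cycle_set.
split; first exact: (mate_eq irr sym pmM').
by apply: (mate_eq irr sym pmM'); rewrite setUC.
Qed.

Lemma step_reverse z : z \in O -> step N' (step N z) = z.
Proof.
move=> zO; have [zD | zD] := boolP (z \in D); last first.
  have [_ _ wD] := step_spec pmM (cycle_vertices_D_or_mate pmM zO).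
  by rewrite step_D ?wD // (swapped_cycle_edge zO zD).2.
have dO := step_cycle_vertices zO; have dD : step N z \notin D.
  by rewrite step_D // (mate_notin_D pmM).
rewrite step_notin_D // (swapped_cycle_edge dO dD).1 step_D // (step_mate pmM zD).
have e_dz : e (mate N z) z by rewrite sym; apply: rel_mate; rewrite ?D_in_C.
by have [_ _ _ ->] := D_partner_spec zD e_dz.
Qed.

Lemma cycle_vertices_swap : cycle_vertices N' = O.
Proof.
apply/setP => z; rewrite !inE.
apply: (fconnect_iter_card_reverse (leq_double_self #|T|)) => x xO.
  by apply: step_off_cycle; rewrite inE.
by apply: step_reverse; rewrite inE.
Qed.

Lemma cycle_set_swap : cycle_set N' = cycle_set N.
Proof.
apply/setP => m; apply/imsetP/imsetP => -[z zO ->]; last first.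
  exists (step N z); first by rewrite cycle_vertices_swap step_cycle_vertices.
  by rewrite step_reverse // setUC.
move: zO; rewrite cycle_vertices_swap inE.
case/(fconnect_iter_card_pre (leq_double_self #|T|)) => u uO <-.
by exists u; rewrite ?inE // step_reverse ?inE // setUC.
Qed.

End SwapAlongCycle.
End ChannelCycle.

Section ColorClass.
Variables (T : finType) (e : rel T) (C : {set T}) (col : T -> bool) (b : bool).
Hypothesis col_e : forall x y, e x y -> col x != col y.
Local Notation D := [set x in C | col x == b].

Lemma color_class_indep : {in D &, forall x y, ~~ e x y}.
Proof.
move=> x y /setIdP[_ /eqP colx] /setIdP[_ /eqP coly].
by apply/negP => /col_e; rewrite colx coly eqxx.
Qed.

Lemma channel_color_class : is_channel e C ->
  forall v, ~~ odd #|[set u in D | e v u]|.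
Proof.
move=> chanC v; have [/eqP colv | colv] := boolP (col v == b).
  suff -> : [set u in D | e v u] = set0 by rewrite cards0.
  apply/setP => u; rewrite !inE; apply/negP => /andP[/andP[_ /eqP colu] /col_e].
  by rewrite colv colu eqxx.
suff -> : [set u in D | e v u] = [set u in C | e v u] by apply: chanC.
apply/setP => u; rewrite !inE -andbA; congr (_ && _).
apply/andP/idP => [[] // | evu]; split=> //.
by move: (col_e evu) colv; case: b; case: (col u); case: (col v).
Qed.

End ColorClass.

Theorem theorem5p2 (T : finType) (e : rel T) (C : {set T}) :
  simple_graph e -> bipartite e -> C != set0 -> is_channel e C ->
  exists S : {set {set T}} -> {set {set T}},
    [/\ (forall mu, perfect_matching e mu ->
           S mu != set0 /\ S mu \subset edges e /\ even_alternating_cycle e mu (S mu)),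
        (forall mu mu', perfect_matching e mu -> perfect_matching e mu' ->
           touching mu C = touching mu' C -> S mu = S mu') &
        (forall mu mu', perfect_matching e mu -> perfect_matching e mu' ->
           S mu = symdiff mu mu' -> S mu' = S mu)].
Proof.
move=> [irr sym] [col col_e] /set0Pn[c0 c0C] chanC.
pose D := [set x in C | col x == col c0].
have sub_DC : D \subset C by apply/subsetP => x /setIdP[].
have D_indep := color_class_indep (C := C) (b := col c0) col_e.
have even_D := channel_color_class (col c0) col_e chanC.
have c0D : c0 \in D by rewrite inE c0C eqxx.
exists (fun mu => cycle_set e D c0 (touching mu C)); split.
- move=> mu pmM; split; first exact: cycle_set_neq0.
  split; first exact: (cycle_set_sub_edges irr sym sub_DC D_indep even_D c0D pmM).
  exact: (cycle_set_alternating irr sym sub_DC D_indep even_D c0D pmM).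
- by move=> mu mu' _ _ ->.
- by move=> mu mu' pmM pmM'; apply: (cycle_set_swap irr sym sub_DC D_indep even_D c0D).
Qed.
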